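(* Let $t\in\mathbb{Q}$, $t\neq2$, and let $x\in\overline{\mathbb{Q}}$ satisfy $f_t(x)=0$. Put $y=\sum_{i=0}^5 a_i x^i$. Then $f_t(y)=0$ and the point $[x,y,1]$ lies on $F_5\cap C_t$.
   Context: $F_5$ is the Fermat curve $x^5+y^5+z^5=0$ in $\mathbb{P}^2$. For $t\in\mathbb{Q}$, $t\neq2$, $C_t$ is the conic $x^2+y^2+z^2+t(xy+xz+yz)=0$. Put $u=\frac{3t^2-2t+2}{t^2+t-1}$, $v=\frac{t^5-5t^4+10t^3-20t^2+15t-7}{(t-2)(t^2+t-1)^2}$, $w=\frac{-3t^5+10t^4-20t^3+20t^2-20t+6}{(t-2)(t^2+t-1)^2}$, and $f_t=X^6+uX^5+vX^4+wX^3+vX^2+uX+1\in\mathbb{Q}[X]$. Put $s=(t^4-3t^3-t^2+3t+1)(t-2)$ (nonzero for rational $t\ne2$) and $a_0=-\frac{(t^2+1)(t^3-t^2+2t-3)}{s}$, $a_1=-\frac{3t^7-9t^6+16t^5-15t^4+10t^3-11t^2+8t-7}{(t^2+t-1)s}$, $a_2=\frac{2t^8-14t^7+52t^6-99t^5+100t^4-54t^3+38t^2-44t+13}{(t^2+t-1)(t-2)s}$, $a_3=\frac{t^8+t^7-21t^6+65t^5-90t^4+78t^3-57t^2+32t-15}{(t^2+t-1)(t-2)s}$, $a_4=-\frac{2t^5-6t^4+13t^3-14t^2+7t-5}{s}$, $a_5=-\frac{(t^2+t-1)(t^3-t^2+2t-3)}{s}$. *)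

From HB Require Import structures.
From mathcomp Require Import all_boot all_order all_algebra all_field.
Set Implicit Arguments. Unset Strict Implicit. Unset Printing Implicit Defensive.
Import Order.TTheory GRing.Theory Num.Theory.
Local Open Scope ring_scope.

Definition u_t (t : rat) : rat := (3*t^+2 - 2*t + 2) / (t^+2 + t - 1).
Definition v_t (t : rat) : rat :=
  (t^+5 - 5*t^+4 + 10*t^+3 - 20*t^+2 + 15*t - 7) / ((t - 2) * (t^+2 + t - 1)^+2).
Definition w_t (t : rat) : rat :=
  (-3*t^+5 + 10*t^+4 - 20*t^+3 + 20*t^+2 - 20*t + 6) / ((t - 2) * (t^+2 + t - 1)^+2).

Definition f_t (t : rat) : {poly rat} :=
  'X^6 + (u_t t)%:P * 'X^5 + (v_t t)%:P * 'X^4 + (w_t t)%:P * 'X^3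
  + (v_t t)%:P * 'X^2 + (u_t t)%:P * 'X + 1.

Definition s_t (t : rat) : rat := (t^+4 - 3*t^+3 - t^+2 + 3*t + 1) * (t - 2).

Definition a0 (t : rat) : rat := - ((t^+2 + 1) * (t^+3 - t^+2 + 2*t - 3)) / s_t t.
Definition a1 (t : rat) : rat :=
  - (3*t^+7 - 9*t^+6 + 16*t^+5 - 15*t^+4 + 10*t^+3 - 11*t^+2 + 8*t - 7)
  / ((t^+2 + t - 1) * s_t t).
Definition a2 (t : rat) : rat :=
  (2*t^+8 - 14*t^+7 + 52*t^+6 - 99*t^+5 + 100*t^+4 - 54*t^+3 + 38*t^+2 - 44*t + 13)
  / ((t^+2 + t - 1) * (t - 2) * s_t t).
Definition a3 (t : rat) : rat :=
  (t^+8 + t^+7 - 21*t^+6 + 65*t^+5 - 90*t^+4 + 78*t^+3 - 57*t^+2 + 32*t - 15)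
  / ((t^+2 + t - 1) * (t - 2) * s_t t).
Definition a4 (t : rat) : rat := - (2*t^+5 - 6*t^+4 + 13*t^+3 - 14*t^+2 + 7*t - 5) / s_t t.
Definition a5 (t : rat) : rat := - ((t^+2 + t - 1) * (t^+3 - t^+2 + 2*t - 3)) / s_t t.

Definition a_coef (t : rat) (i : nat) : rat :=
  match i with
  | 0 => a0 t | 1 => a1 t | 2 => a2 t | 3 => a3 t | 4 => a4 t | 5 => a5 t | _ => 0
  end.

Definition fermat5 (R : nzRingType) (x y z : R) : R := x^+5 + y^+5 + z^+5.
Definition conic_t (t : rat) (x y z : algC) : algC :=
  x^+2 + y^+2 + z^+2 + ratr t * (x*y + x*z + y*z).

From HB Require Import structures.
From mathcomp Require Import all_boot all_order all_algebra all_field.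
From mathcomp Require Import ring.
Import Order.TTheory GRing.Theory Num.Theory.
Set Implicit Arguments. Unset Strict Implicit. Unset Printing Implicit Defensive.
Local Open Scope ring_scope.

(* All three claims are identities in Q(t)[x]/(f_t): reducing y^2, ..., y^6 and x y
   modulo f_t (each reduction certified by its explicit quotient), one finds
   y^5 = -1 - x^5, and the conic equation and f_t(y) = 0 become identities between
   polynomials of degree < 6 in x.  These computations only divide by t - 2,
   t^2 + t - 1 and t^4 - 3t^3 - t^2 + 3t + 1; the last two have no rational root,
   since such a root would be an integer dividing the constant term, i.e. +-1. *)

Lemma rat_root_monic_int (p : {poly int}) (t : rat) :
  p \is monic -> root (map_poly intr p) t -> t \is a Num.int.
Proof.
move=> p_monic pt; rewrite -(Cint_rat t).
apply: Cint_rat_Aint; first exact: Crat_rat.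
apply: (@root_monic_Aint (map_poly intr p)).
- suff -> : map_poly intr p = map_poly (@ratr algC) (map_poly intr p : {poly rat}).
    by rewrite fmorph_root.
  by apply/polyP => i; rewrite !coef_map /= rmorph_int.
- exact: monic_map.
- by apply/polyOverP => i; rewrite coef_map rpred_int.
Qed.

Lemma monicMXaddC (R : nzRingType) (p : {poly R}) (c : R) :
  p \is monic -> p * 'X + c%:P \is monic.
Proof.
move=> /monicP p1; rewrite monicE lead_coefDl ?lead_coefMX ?p1 //.
rewrite size_mulX ?monic_neq0 ?(leq_ltn_trans (size_polyC_leq1 c)) //.
  by rewrite ltnS lt0n size_poly_eq0 -lead_coef_eq0 p1 oner_eq0.
by apply/monicP.
Qed.

Lemma mulz_eq1 (m n : int) : m * n = 1 -> n = 1 \/ n = -1.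
Proof. by move/intUnitRing.unitzPl; rewrite qualifE => /orP[]/eqP; [left | right]. Qed.

Lemma no_rat_root_golden (t : rat) : t^+2 + t - 1 != 0.
Proof.
apply/eqP => t0.
have /intrP[n tn] : t \is a Num.int.
  apply: (@rat_root_monic_int (('X + 1%:P) * 'X + (-1)%:P)).
    exact/monicMXaddC/monicXaddC.
  rewrite rootE !(rmorphD, rmorphM, rmorphN, rmorph1).
  rewrite !(hornerD, hornerN, hornerM, hornerX, hornerC).
  (* the image of 'X still carries its morphism structure: fold it to expose map_polyX *)
  rewrite -[_.[t]]/((map_poly intr 'X).[t]) map_polyX hornerX.
  by rewrite -t0; apply/eqP; ring.
have : (n + 1) * n = 1.
  by apply: (@intr_inj rat); rewrite rmorph1 -[RHS]addr0 -t0 tn; ring.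
by case/mulz_eq1 => n1; move: t0; rewrite tn n1.
Qed.

Lemma no_rat_root_quartic (t : rat) : t^+4 - 3*t^+3 - t^+2 + 3*t + 1 != 0.
Proof.
apply/eqP => t0.
have /intrP[n tn] : t \is a Num.int.
  apply: (@rat_root_monic_int
     (((('X - 3%:R%:P) * 'X + (-1)%:P) * 'X + 3%:R%:P) * 'X + 1%:P)).
    by do 3!apply: monicMXaddC; apply: monicXsubC.
  rewrite rootE !(rmorph_nat, rmorphD, rmorphM, rmorphN, rmorphB, rmorph1).
  rewrite !(hornerD, hornerN, hornerM, hornerX, hornerC, hornerMn).
  rewrite -[_.[t]]/((map_poly intr 'X).[t]) map_polyX hornerX.
  by rewrite -t0; apply/eqP; ring.
have : - (n^+3 - 3 * n^+2 - n + 3) * n = 1.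
  by apply: (@intr_inj rat); rewrite rmorph1 -[RHS]subr0 -t0 tn; ring.
by case/mulz_eq1 => n1; move: t0; rewrite tn n1.
Qed.

Lemma horner_map_CXn (R S : comNzRingType) (f : {rmorphism R -> S}) (c : R) n (z : S) :
  (map_poly f (c%:P * 'X^n)).[z] = f c * z ^+ n.
Proof. by rewrite rmorphM /= map_polyC map_polyXn hornerE hornerXn. Qed.

Lemma horner_map_palindromic_sextic (R S : comNzRingType) (f : {rmorphism R -> S})
    (u v w : R) (z : S) :
  (map_poly f ('X^6 + u%:P * 'X^5 + v%:P * 'X^4 + w%:P * 'X^3
               + v%:P * 'X^2 + u%:P * 'X + 1)).[z]
  = z^+6 + f u * z^+5 + f v * z^+4 + f w * z^+3 + f v * z^+2 + f u * z + 1.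
Proof.
rewrite !raddfD !hornerD !horner_map_CXn /= map_polyXn rmorphM /=.
by rewrite map_polyC map_polyX rmorph1 !hornerE.
Qed.

Section FtOverField.

Variables (K : fieldType) (T : K).

Local Notation d1 := (T^+2 + T - 1).
Local Notation d3 := (T^+4 - 3*T^+3 - T^+2 + 3*T + 1).
Local Notation s := (d3 * (T - 2)).

Definition u_of : K := (3*T^+2 - 2*T + 2) / d1.
Definition v_of : K :=
  (T^+5 - 5*T^+4 + 10*T^+3 - 20*T^+2 + 15*T - 7) / ((T - 2) * d1^+2).
Definition w_of : K :=
  (-3*T^+5 + 10*T^+4 - 20*T^+3 + 20*T^+2 - 20*T + 6) / ((T - 2) * d1^+2).

Definition a_of (i : nat) : K :=
  match i with
  | 0 => - ((T^+2 + 1) * (T^+3 - T^+2 + 2*T - 3)) / s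
  | 1 => - (3*T^+7 - 9*T^+6 + 16*T^+5 - 15*T^+4 + 10*T^+3 - 11*T^+2 + 8*T - 7)
         / (d1 * s)
  | 2 => (2*T^+8 - 14*T^+7 + 52*T^+6 - 99*T^+5 + 100*T^+4 - 54*T^+3 + 38*T^+2
          - 44*T + 13) / (d1 * (T - 2) * s)
  | 3 => (T^+8 + T^+7 - 21*T^+6 + 65*T^+5 - 90*T^+4 + 78*T^+3 - 57*T^+2 + 32*T - 15)
         / (d1 * (T - 2) * s)
  | 4 => - (2*T^+5 - 6*T^+4 + 13*T^+3 - 14*T^+2 + 7*T - 5) / s
  | 5 => - (d1 * (T^+3 - T^+2 + 2*T - 3)) / s
  | _ => 0
  end.

Definition f_of (x : K) : K :=
  x^+6 + u_of * x^+5 + v_of * x^+4 + w_of * x^+3 + v_of * x^+2 + u_of * x + 1.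

Definition y_of (x : K) : K := \sum_(i < 6) a_of i * x ^+ i.

Lemma y_ofE x :
  y_of x = a_of 0 + a_of 1 * x + a_of 2 * x^+2 + a_of 3 * x^+3 + a_of 4 * x^+4
           + a_of 5 * x^+5.
Proof. by rewrite /y_of !big_ord_recl big_ord0 /= expr0 mulr1 expr1 addr0 !addrA. Qed.

Hypotheses (T_neq2 : T - 2 != 0) (d1_neq0 : d1 != 0) (d3_neq0 : d3 != 0).

Variables (x : K) (fx0 : f_of x = 0).

Local Notation y := (y_of x).

Lemma eq_mod_f (q a b : K) : a = b + q * f_of x -> a = b.
Proof. by rewrite fx0 mulr0 addr0. Qed.

Local Ltac field_T :=
  rewrite y_ofE /a_of /f_of /u_of /v_of /w_of; field;
  rewrite ?T_neq2 ?d1_neq0 ?d3_neq0.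

Lemma y_sqr : y ^+ 2 =
    (- 2*T^+4 + 4*T^+3 - T^+2 - 1) / d3
  + (- 3*T^+6 + 10*T^+5 - 10*T^+4 + 5*T^+3 - 5*T^+2 + 6*T) / (d1 * d3) * x
  + (4*T^+6 - 13*T^+5 + 20*T^+4 - 15*T^+3 + 10*T^+2 - 3*T + 1) / (d1 * d3) * x^+2
  + (5*T^+5 - 15*T^+4 + 20*T^+3 - 10*T^+2 + 5*T) / (d1 * d3) * x^+3
  + (- 3*T^+4 + 8*T^+3 - 6*T^+2 + 4*T) / d3 * x^+4
  + (- T^+4 + T^+3 + 3*T^+2 - 2*T) / d3 * x^+5.
Proof.
apply: (eq_mod_f (q :=
    (3*T^+10 - 20*T^+9 + 66*T^+8 - 91*T^+7 + 27*T^+6 + 30*T^+5 + 10*T^+4 - 47*T^+3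
     + 17*T^+2 - 4*T + 13)
      / ((T - 2)^+2 * d3^+2)
  + (11*T^+8 - 40*T^+7 + 58*T^+6 - 54*T^+5 + 40*T^+4 - 2*T^+3 - 5*T^+2 - 21*T + 8)
      / ((T - 2) * d3^+2) * x
  + (- 2*T^+11 + 7*T^+10 + 6*T^+9 - 93*T^+8 + 264*T^+7 - 439*T^+6 + 523*T^+5 - 442*T^+4
     + 251*T^+3 - 98*T^+2 + 46*T - 29)
      / ((T - 2)^+3 * d3^+2) * x^+2
  + (T^+8 - 3*T^+7 - T^+5 - 5*T^+4 + 18*T^+3 - 9*T^+2 + 5*T - 3) / d3^+2 * x^+3
  + (T^+10 - 10*T^+6 + 6*T^+5 + 25*T^+2 - 30*T + 9) / ((T - 2)^+2 * d3^+2) * x^+4)).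
by field_T.
Qed.

Lemma y_cube : y ^+ 3 =
    (- 3*T^+4 + 4*T^+3 - 2*T^+2 + T + 2) / d3
  + (- 4*T^+6 + 6*T^+5 - 10*T^+4 + 15*T^+3 - 5*T^+2 - 2*T + 3) / (d1 * d3) * x
  + (4*T^+7 - 20*T^+6 + 49*T^+5 - 60*T^+4 + 45*T^+3 - 13*T^+2 - 15*T + 7)
      / (d1 * (T - 2) * d3) * x^+2
  + (T^+7 + 5*T^+6 - 29*T^+5 + 60*T^+4 - 50*T^+3 + 8*T^+2 + 10*T - 7)
      / (d1 * (T - 2) * d3) * x^+3
  + (- 4*T^+4 + 8*T^+3 - 7*T^+2 + 3) / d3 * x^+4
  + (- 2*T^+4 - T^+3 + 4*T^+2 - 1) / d3 * x^+5.
Proof.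
rewrite exprS y_sqr.
apply: (eq_mod_f (q :=
    (5*T^+9 - 25*T^+8 + 48*T^+7 - 37*T^+6 + 2*T^+5 + 10*T^+4 - 16*T^+2 + 14*T + 1)
      / ((T - 2) * d3^+2)
  + (- 2*T^+9 + 18*T^+8 - 64*T^+7 + 104*T^+6 - 79*T^+5 + 24*T^+4 - 11*T^+3 + 18*T^+2 - 8*T
     + 3)
      / ((T - 2) * d3^+2) * x
  + (- 2*T^+9 + 24*T^+7 - 67*T^+6 + 95*T^+5 - 86*T^+4 + 45*T^+3 - 13*T^+2 + 9*T)
      / ((T - 2) * d3^+2) * x^+2
  + (2*T^+8 - 4*T^+7 + 5*T^+6 + 5*T^+5 - 20*T^+4 + 16*T^+3 - 12*T^+2 + 5*T) / d3^+2 * x^+3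
  + (T^+8 + T^+7 - T^+6 - 5*T^+4 - 2*T^+3 + 8*T^+2 - 3*T) / d3^+2 * x^+4)).
by field_T.
Qed.

Lemma y_exp4 : y ^+ 4 =
    (- 2*T^+4 + 5*T^+3 - 2*T^+2 - 3*T + 1) / d3
  + (- T^+6 + 5*T^+5 - 10*T^+4 + 10*T^+3 - 8*T) / (d1 * d3) * x
  + (3*T^+6 - 9*T^+5 + 15*T^+4 - 10*T^+3 - 5*T^+2 + 4*T - 2) / (d1 * d3) * x^+2
  + (- T^+6 + 5*T^+5 - 10*T^+4 + 10*T^+3 - 8*T) / (d1 * d3) * x^+3
  + (- 2*T^+4 + 5*T^+3 - 2*T^+2 - 3*T + 1) / d3 * x^+4.
Proof.
rewrite exprS y_cube.
apply: (eq_mod_f (q :=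
    (5*T^+9 - 22*T^+8 + 52*T^+7 - 49*T^+6 - 14*T^+5 + 25*T^+4 + 24*T^+3 - 24*T^+2 - 2*T
     + 8)
      / ((T - 2) * d3^+2)
  + (- T^+9 + 18*T^+8 - 71*T^+7 + 115*T^+6 - 69*T^+5 - 3*T^+4 - 11*T^+3 + 22*T^+2 + 10*T
     - 7)
      / ((T - 2) * d3^+2) * x
  + (- 3*T^+10 + 7*T^+9 + 22*T^+8 - 140*T^+7 + 277*T^+6 - 265*T^+5 + 136*T^+4 - 34*T^+3
     - 5*T^+2 + 16*T - 13)
      / ((T - 2)^+2 * d3^+2) * x^+2
  + (2*T^+8 - 7*T^+7 + 2*T^+6 + 13*T^+5 - 15*T^+4 + 16*T^+3 - 11*T^+2 - 4*T + 4)
      / d3^+2 * x^+3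
  + (2*T^+9 + T^+8 - 4*T^+7 - 9*T^+5 + T^+4 + 23*T^+3 - 12*T^+2 - 5*T + 3)
      / ((T - 2) * d3^+2) * x^+4)).
by field_T.
Qed.

Lemma y_exp5 : y ^+ 5 =
    - 1 - x^+5.
Proof.
rewrite exprS y_exp4.
apply: (eq_mod_f (q :=
    (3*T^+9 - 15*T^+8 + 32*T^+7 - 24*T^+6 - 13*T^+5 + 4*T^+4 + 35*T^+3 - 4*T^+2 - 22*T + 1)
      / ((T - 2) * d3^+2)
  + (- 2*T^+9 + 14*T^+8 - 47*T^+7 + 69*T^+6 - 30*T^+5 - 11*T^+4 + 7*T^+3 - T^+2 + 2*T - 5)
      / ((T - 2) * d3^+2) * x
  + (- T^+9 - 3*T^+8 + 26*T^+7 - 51*T^+6 + 38*T^+5 - 13*T^+4 + 11*T^+3 + 8*T^+2 - 18*T - 1)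
      / ((T - 2) * d3^+2) * x^+2
  + (2*T^+9 - 5*T^+8 + 2*T^+7 + 3*T^+6 - 11*T^+5 + 31*T^+4 - 25*T^+3 - 9*T^+2 + 14*T - 3)
      / ((T - 2) * d3^+2) * x^+3)).
by field_T.
Qed.

Lemma y_exp6 : y ^+ 6 =
    (T^+4 - 2*T^+3 + 3*T^+2 - 2) / d3 * x
  + (- T^+9 + 10*T^+8 - 31*T^+7 + 36*T^+6 - 12*T^+5 - 3*T^+4 - 15*T^+3 + 2*T^+2 + 18*T - 1)
      / (d1^+2 * (T - 2) * d3) * x^+2
  + (T^+9 - 15*T^+8 + 51*T^+7 - 66*T^+6 + 22*T^+5 + 3*T^+4 + 8*T^+2 - 8*T + 6)
      / (d1^+2 * (T - 2) * d3) * x^+3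
  + (- T^+9 + 10*T^+8 - 31*T^+7 + 36*T^+6 - 12*T^+5 - 3*T^+4 - 15*T^+3 + 2*T^+2 + 18*T - 1)
      / (d1^+2 * (T - 2) * d3) * x^+4
  + (T^+4 - 2*T^+3 + 3*T^+2 - 2) / d3 * x^+5.
Proof.
rewrite exprS y_exp5.
apply: (eq_mod_f (q :=
    (T^+5 - T^+4 + 3*T^+3 - 4*T^+2 + 2*T - 3) / ((T - 2) * d3)
  + (- T^+5 + 5*T - 3) / ((T - 2) * d3) * x
  + (T^+5 + T^+4 - 3*T^+3 - T^+2 + 3*T - 1) / ((T - 2) * d3) * x^+2
  + (- T^+5 - T^+4 + 3*T^+3 + T^+2 - 3*T + 1) / ((T - 2) * d3) * x^+3
  + (T^+5 - 5*T + 3) / ((T - 2) * d3) * x^+4)).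
by field_T.
Qed.

Lemma mul_x_y : x * y =
    (T^+5 - 5*T + 3) / ((T - 2) * d3)
  + (2*T^+5 - 4*T^+4 + 7*T^+3 - 11*T^+2 + 8*T - 3) / ((T - 2) * d3) * x
  + (- 2*T^+6 + 11*T^+5 - 30*T^+4 + 45*T^+3 - 45*T^+2 + 29*T - 7)
      / ((T - 2)^+2 * d3) * x^+2
  + (- T^+6 + 15*T^+4 - 45*T^+3 + 50*T^+2 - 23*T + 5) / ((T - 2)^+2 * d3) * x^+3
  + (2*T^+5 - 3*T^+4 - T^+3 + 8*T^+2 - 9*T + 3) / ((T - 2) * d3) * x^+4
  + (T^+5 + T^+4 - 3*T^+3 - T^+2 + 3*T - 1) / ((T - 2) * d3) * x^+5.
Proof.
apply: (eq_mod_f (q :=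
    (- T^+5 + 5*T - 3) / ((T - 2) * d3))).
by field_T.
Qed.

Lemma fermat_of_root : x^+5 + y^+5 + 1 = 0.
Proof. by rewrite y_exp5; ring. Qed.

Lemma conic_of_root : x^+2 + y^+2 + 1 + T * (x * y + x + y) = 0.
Proof. by rewrite y_sqr mul_x_y; field_T. Qed.

Lemma f_of_root : f_of y = 0.
Proof. by rewrite {1}/f_of y_exp6 y_exp5 y_exp4 y_cube y_sqr; field_T. Qed.

End FtOverField.

Lemma ratr_u_t (L : numFieldType) (t : rat) : ratr (u_t t) = u_of (ratr t) :> L.
Proof. by rewrite fmorph_div; congr (_ / _); ring. Qed.

Lemma ratr_v_t (L : numFieldType) (t : rat) : ratr (v_t t) = v_of (ratr t) :> L.
Proof. by rewrite fmorph_div; congr (_ / _); ring. Qed.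

Lemma ratr_w_t (L : numFieldType) (t : rat) : ratr (w_t t) = w_of (ratr t) :> L.
Proof. by rewrite fmorph_div; congr (_ / _); ring. Qed.

Lemma ratr_a_coef (L : numFieldType) (t : rat) (i : nat) :
  ratr (a_coef t i) = a_of (ratr t) i :> L.
Proof.
case: i => [|[|[|[|[|[|i]]]]]] /=; rewrite ?rmorph0 //.
all: by rewrite fmorph_div /s_t; congr (_ / _); ring.
Qed.

Lemma horner_map_f_t (L : numFieldType) (t : rat) (z : L) :
  (map_poly ratr (f_t t)).[z] = f_of (ratr t) z.
Proof. by rewrite horner_map_palindromic_sextic /= ratr_u_t ratr_v_t ratr_w_t. Qed.

Theorem proposition3 (t : rat) (ht : t != 2) (x : algC)
  (hx : root (map_poly ratr (f_t t)) x) :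
  let y := \sum_(i < 6) ratr (a_coef t i) * x ^+ i in
  root (map_poly ratr (f_t t)) y /\
  fermat5 x y 1 = 0 /\ conic_t t x y 1 = 0.
Proof.
move=> y.
set T : algC := ratr t.
have T_neq2 : T - 2 != 0.
  by rewrite (_ : T - 2 = ratr (t - 2)) ?fmorph_eq0 ?subr_eq0 //; ring.
have d1_neq0 : T^+2 + T - 1 != 0.
  by rewrite (_ : _ - 1 = ratr (t^+2 + t - 1)) ?fmorph_eq0 ?no_rat_root_golden //; ring.
have d3_neq0 : T^+4 - 3*T^+3 - T^+2 + 3*T + 1 != 0.
  by rewrite (_ : _ + 1 = ratr (t^+4 - 3*t^+3 - t^+2 + 3*t + 1))
    ?fmorph_eq0 ?no_rat_root_quartic //; ring.
have fx0 : f_of T x = 0 by rewrite -horner_map_f_t; exact/eqP.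
have -> : y = y_of T x by apply: eq_bigr => i _; rewrite ratr_a_coef.
rewrite /root horner_map_f_t /fermat5 /conic_t !expr1n !mulr1.
split; first exact/eqP/f_of_root.
by split; [apply: fermat_of_root | apply: conic_of_root].
Qed.
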